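(* Let $\psi_j$ be a decomposable factorization curve of a (real or complex) factorization structure $\varphi:\mathfrak{h}\to V^*$, and let $1\le r\le\deg\psi_j+1$. Then for any $r$ pairwise distinct points $\ell_1,\ldots,\ell_r\in\mathbb{P}(V_j)$, the lines $\psi_j(\ell_1),\ldots,\psi_j(\ell_r)\subset\mathfrak{h}$ are linearly independent.
   Context: $V_1,\ldots,V_m$ are 2-dimensional vector spaces over $\mathbb{F}=\mathbb{R}$ or $\mathbb{C}$, $V^*=V_1^*\otimes\cdots\otimes V_m^*$, $\Sigma^0_{j,\ell}=V_1^*\otimes\cdots\otimes\ell^0\otimes\cdots\otimes V_m^*$ ($\ell^0$ the annihilator of $\ell$, in slot $j$). A factorization structure of dimension $m$ is an injective linear map $\varphi:\mathfrak{h}\to V^*$, $\dim\mathfrak{h}=m+1$, with $\dim(\varphi(\mathfrak{h})\cap\Sigma^0_{j,\ell})=1$ for all $j$ and all $\ell$ in a nonempty Zariski-open subset of $\mathbb{P}(V_j)$. The $j$-th factorization curve $\psi_j:\mathbb{P}(V_j)\to\mathbb{P}(\mathfrak{h})$ is the unique regular extension of the generically defined regular map $\ell\mapsto\varphi^{-1}(\varphi(\mathfrak{h})\cap\Sigma^0_{j,\ell})$; $\deg\psi_j$ is the integer $e$ with $\psi_j^*\mathcal{O}_{\mathfrak{h}}(1)\cong\mathcal{O}_{V_j}(e)$. Curves with the same image are equivalent; $\psi_j$ is decomposable if its equivalence class in $\{\psi_1,\ldots,\psi_m\}$ has exactly $\deg\psi_j$ elements. *)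

From mathcomp Require Import all_boot all_algebra.
From mathcomp Require Export reals.
From mathcomp.real_closed Require Export complex.
Set Implicit Arguments. Unset Strict Implicit. Unset Printing Implicit Defensive.
Import GRing.Theory.
Local Open Scope ring_scope.

(* V_j = F^2 with standard basis e_0,e_1 ; V_j^* = F^2 with the dual basis.
   A point l of P(V_j) is represented by a nonzero row vector v : 'rV_2
   (l = span v); two representatives give the same point iff (v == v')%MS.
   V^* = V_1^* (x) ... (x) V_m^* = F^(2^m); the basis tensor
   e^*_{x_1} (x) ... (x) e^*_{x_m} (x_k in {0,1}) has index
   i = \sum_k x_k 2^k, i.e. x_k = tbit k i.
   h = F^(m+1) (row vectors), phi : h -> V^* is x |-> x *m Phi. *)

Definition tbit (k : nat) (i : nat) : bool := odd (i %/ 2 ^ k).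

Section Defs.
Variable F : fieldType.

(* The generator of the annihilator l^0 of l = span v inside V_j^* *)
Definition annih (v : 'rV[F]_2) (b : bool) : F :=
  if b then v 0 0 else - v 0 1.

(* Sigma^0_{j,l} = V_1^* (x) ... (x) l^0 (x) ... (x) V_m^*, given as the row
   space spanned by the pure tensors
   e^*_{x_1} (x) ... (x) annih v (slot j) (x) ... (x) e^*_{x_m}. *)
Definition Sigma0 (m : nat) (j : 'I_m) (v : 'rV[F]_2) : 'M[F]_(2 ^ m) :=
  \matrix_(i < 2 ^ m, i' < 2 ^ m)
    ((\prod_(k < m | k != j) (tbit k i' == tbit k i)%:R) * annih v (tbit j i')).

(* phi^{-1}(phi(h) cap Sigma^0_{j,l}) as a subspace of h *)
Definition preimSigma (m : nat) (Phi : 'M[F]_(m.+1, 2 ^ m)) (j : 'I_m)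
    (v : 'rV[F]_2) : 'M[F]_(m.+1) :=
  kermx (Phi *m cokermx (Sigma0 j v)).

(* value at v = (v0, v1) of the binary form of degree e
   \sum_{k<=e} p_k v0^k v1^(e-k)  (p : {poly F} holds the coefficients p_k) *)
Definition bform (e : nat) (p : {poly F}) (v : 'rV[F]_2) : F :=
  \sum_(k < e.+1) p`_k * v 0 0 ^+ k * v 0 1 ^+ (e - k).

Definition is_bform (e : nat) (p : {poly F}) : bool := (size p <= e.+1)%N.

(* A nonempty Zariski-open subset of P^1 contains a nonempty basic open set
   D(f) = {l | f(l) <> 0} for a nonzero binary form f; conversely D(f) is a
   nonempty (F infinite) Zariski open. *)
Definition generically (P : 'rV[F]_2 -> Prop) : Prop :=
  exists (d : nat) (f : {poly F}), [/\ is_bform d f, f != 0 &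
    forall v : 'rV[F]_2, v != 0 -> bform d f v != 0 -> P v].

Definition factorization_structure (m : nat) (Phi : 'M[F]_(m.+1, 2 ^ m)) : Prop :=
  row_free Phi /\
  forall j : 'I_m, generically (fun v => \rank (Phi :&: Sigma0 j v)%MS = 1%N).

(* A regular map P^1 -> P(h) = P^m given in homogeneous coordinates by
   binary forms P_0..P_m of common degree e without common zero on
   P^1(algebraic closure): the dehomogenised polynomials have no common
   nonconstant factor and not all of them vanish at [1:0]. For such a map,
   psi^* O(1) = O(e). *)
Definition regular_P1_map (m e : nat) (P : 'I_m.+1 -> {poly F}) : Prop :=
  [/\ forall i, is_bform e (P i),
      forall d : {poly F}, (forall i, d %| P i) -> (size d <= 1)%N &
      exists i, (P i)`_e != 0].

Definition rmap_pt (m e : nat) (P : 'I_m.+1 -> {poly F}) (v : 'rV[F]_2)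
  : 'rV[F]_(m.+1) := \row_i bform e (P i) v.

(* (e, P) is a representation of the j-th factorization curve psi_j of Phi,
   of degree e: it is a regular map which agrees on a nonempty Zariski open
   subset with l |-> phi^{-1}(phi(h) cap Sigma^0_{j,l}). *)
Definition factorization_curve (m : nat) (Phi : 'M[F]_(m.+1, 2 ^ m)) (j : 'I_m)
    (e : nat) (P : 'I_m.+1 -> {poly F}) : Prop :=
  regular_P1_map e P /\
  generically (fun v => \rank (Phi :&: Sigma0 j v)%MS = 1%N /\
                        (rmap_pt e P v == preimSigma Phi j v)%MS).

Definition in_image (m e : nat) (P : 'I_m.+1 -> {poly F}) (w : 'rV[F]_(m.+1)) : Prop :=
  exists v : 'rV[F]_2, v != 0 /\ (rmap_pt e P v == w)%MS.

Definition same_image (m e1 e2 : nat) (P1 P2 : 'I_m.+1 -> {poly F}) : Prop :=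
  forall w : 'rV[F]_(m.+1), w != 0 -> (in_image e1 P1 w <-> in_image e2 P2 w).

End Defs.

(* For every point l of P(V_j), phi(psi_j(l)) lies in Sigma^0_{j,l}: contracting
   its j-th tensor factor with l gives zero.  This holds generically by
   definition, hence everywhere, the contraction being polynomial in l.
   If psi_k has the same image as psi_j, every psi_j(l_a) is also psi_k(u_a),
   with the u_a pairwise distinct because psi_j is injective, so the tensors
   y_a = phi(psi_j(l_a)) are separated in each of the deg psi_j slots k of
   the curves equivalent to psi_j.  Contracting slot k with u_b kills y_b and
   no other y_a, and commutes with contractions in the other slots; induction
   on the number of slots shows that deg psi_j + 1 separated tensors are
   linearly independent. *)

From mathcomp Require Import all_boot all_algebra.
From mathcomp Require Import reals.
From mathcomp.real_closed Require Import complex.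
From mathcomp Require Import ring.
Import GRing.Theory.
Local Open Scope ring_scope.
Set Implicit Arguments. Unset Strict Implicit. Unset Printing Implicit Defensive.

Lemma tbit0 i : tbit 0 i = odd i.
Proof. by rewrite /tbit expn0 divn1. Qed.

Lemma tbitS k i : tbit k.+1 i = tbit k (i %/ 2).
Proof. by rewrite /tbit expnS divnMA. Qed.

Lemma tbit_inj n i i' : (i < 2 ^ n)%N -> (i' < 2 ^ n)%N ->
  (forall k, (k < n)%N -> tbit k i = tbit k i') -> i = i'.
Proof.
elim: n i i' => [|n IH] i i' lt_i lt_i' eq_bits.
  by move: lt_i lt_i'; rewrite expn0 !ltnS !leqn0 => /eqP-> /eqP->.
have eq_half : (i %/ 2 = i' %/ 2)%N.
  apply: IH; rewrite ?ltn_divLR // -?expnSr // => k lt_k.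
  by rewrite -!tbitS; apply: eq_bits.
have := eq_bits 0%N isT; rewrite !tbit0 => eq_odd.
by rewrite (divn_eq i 2) (divn_eq i' 2) eq_half !modn2 eq_odd.
Qed.

Section TensorIndices.
Variable m : nat.

Definition tbits (i : 'I_(2 ^ m)) : {ffun 'I_m -> bool} := [ffun k : 'I_m => tbit k i].

Lemma tbits_inj : injective tbits.
Proof.
move=> i i' eq_i; apply: val_inj; apply: (@tbit_inj m) => [||k lt_k]; rewrite ?ltn_ord //.
by have := congr1 (fun x : {ffun 'I_m -> bool} => x (Ordinal lt_k)) eq_i; rewrite !ffunE.
Qed.

Lemma tbits_codom x : x \in codom tbits.
Proof.
by apply: inj_card_onto tbits_inj _ _; rewrite card_ffun card_bool !card_ord.
Qed.

Definition of_tbits (x : {ffun 'I_m -> bool}) : 'I_(2 ^ m) := iinv (tbits_codom x).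

Lemma of_tbitsK x : tbits (of_tbits x) = x.
Proof. exact: f_iinv. Qed.

Lemma tbitsK i : of_tbits (tbits i) = i.
Proof. by apply: tbits_inj; rewrite of_tbitsK. Qed.

Lemma tbit_of_tbits x (k : 'I_m) : tbit k (of_tbits x) = x k.
Proof. by rewrite -[in RHS](of_tbitsK x) ffunE. Qed.

Definition setbit (x : {ffun 'I_m -> bool}) (k : 'I_m) (b : bool) : {ffun 'I_m -> bool} :=
  [ffun k' => if k' == k then b else x k'].

Lemma setbitC x k k' b b' : k != k' ->
  setbit (setbit x k b) k' b' = setbit (setbit x k' b') k b.
Proof.
move=> neq_k; apply/ffunP => t; rewrite !ffunE.
by case: (eqVneq t k') => [->|//]; rewrite eq_sym (negbTE neq_k).
Qed.

Lemma setbit_id x k : setbit x k (x k) = x.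
Proof. by apply/ffunP => t; rewrite !ffunE; case: eqP => // ->. Qed.

End TensorIndices.

Section Contraction.
Variables (F : fieldType) (m : nat).
Implicit Types (u v : 'rV[F]_2) (y : 'rV[F]_(2 ^ m)) (k : 'I_m).

(* Contraction of the k-th tensor factor with u.  The result does not depend
   on the k-th bit of its index; it is kept as a tensor of the same shape so
   that contractions in different slots compose. *)
Definition contract k u y : 'rV[F]_(2 ^ m) :=
  \row_i (y 0 (of_tbits (setbit (tbits i) k false)) * u 0 0 +
          y 0 (of_tbits (setbit (tbits i) k true)) * u 0 1).

Definition det2 u u' := u 0 0 * u' 0 1 - u 0 1 * u' 0 0.

Lemma contract_sum (I : finType) k u (c : I -> F) (y : I -> 'rV[F]_(2 ^ m)) :
  contract k u (\sum_a c a *: y a) = \sum_a c a *: contract k u (y a).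
Proof.
apply/rowP => i; rewrite !mxE !summxE !big_distrl -big_split /=.
by apply: eq_bigr => a _; rewrite !mxE; ring.
Qed.

Lemma contractZ k u s y : contract k u (s *: y) = s *: contract k u y.
Proof. by apply/rowP => i; rewrite !mxE; ring. Qed.

Lemma contract0 k u : contract k u 0 = 0.
Proof. by apply/rowP => i; rewrite !mxE; ring. Qed.

Lemma contractC k k' u u' y : k != k' ->
  contract k' u' (contract k u y) = contract k u (contract k' u' y).
Proof. by move=> neq_k; apply/rowP => i; rewrite !mxE !of_tbitsK !(setbitC _ _ _ neq_k); ring. Qed.

(* Each pair (y_0, y_1) of entries of y differing only in the k-th bit is a
   common zero of the linear forms with coefficients u and u'. *)
Lemma contract_det2 k u u' y :
  contract k u y = 0 -> contract k u' y = 0 -> y != 0 -> det2 u u' = 0.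
Proof.
move=> yu0 yu'0; apply: contraNeq => det_neq0; apply/eqP/rowP => i.
have := congr1 (fun z : 'rV[F]_(2 ^ m) => z 0 i) yu0.
have := congr1 (fun z : 'rV[F]_(2 ^ m) => z 0 i) yu'0.
rewrite !mxE; set y0 := y 0 _; set y1 := y 0 _ => E' E.
have [y00 y10] : y0 = 0 /\ y1 = 0.
  split; apply: (mulIf det_neq0); rewrite mul0r /det2.
    transitivity ((y0 * u 0 0 + y1 * u 0 1) * u' 0 1 - (y0 * u' 0 0 + y1 * u' 0 1) * u 0 1).
      by ring.
    by rewrite E E'; ring.
  transitivity ((y0 * u' 0 0 + y1 * u' 0 1) * u 0 0 - (y0 * u 0 0 + y1 * u 0 1) * u' 0 0).
    by ring.
  by rewrite E E'; ring.
rewrite -(tbitsK i) -(setbit_id (tbits i) k).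
by case: (tbits i k); [exact: y10 | exact: y00].
Qed.

Lemma contract_Sigma0 k v y : (y <= Sigma0 k v)%MS -> contract k v y = 0.
Proof.
case/submxP => D ->; apply/rowP => i; rewrite !mxE !big_distrl -big_split /=.
apply: big1 => i' _; rewrite !mxE !tbit_of_tbits !ffunE !eqxx /annih.
under [X in _ * (X * _) * _ + _]eq_bigr => t neq_t.
  by rewrite tbit_of_tbits ffunE (negbTE neq_t) over.
under [X in _ + _ * (X * _) * _]eq_bigr => t neq_t.
  by rewrite tbit_of_tbits ffunE (negbTE neq_t) over.
ring.
Qed.

End Contraction.

Lemma sum_scale_single (F : fieldType) (V : lmodType F) (I : finType)
    (y : I -> V) (c : I -> F) a :
  (forall b, b != a -> c b = 0) -> y a != 0 -> \sum_b c b *: y b = 0 -> c a = 0.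
Proof.
move=> c_eq0 ya_neq0; rewrite (bigD1 a) //= big1 ?addr0 => [/eqP|b /c_eq0->]; last exact: scale0r.
by rewrite scaler_eq0 (negbTE ya_neq0) orbF => /eqP.
Qed.

Section SlotSeparation.
Variables (F : fieldType) (m : nat) (I : finType).
Implicit Types (A : {set I}) (y : I -> 'rV[F]_(2 ^ m)).

Definition slot_separated (k : 'I_m) A y :=
  exists u : I -> 'rV[F]_2,
    {in A, forall a, contract k (u a) (y a) = 0} /\
    {in A &, forall a b, a != b -> det2 (u a) (u b) != 0}.

Lemma slot_separated_indep (S : seq 'I_m) A y (c : I -> F) :
  uniq S -> (#|A| <= (size S).+1)%N -> {in A, forall a, y a != 0} ->
  {in S, forall k, slot_separated k A y} ->
  (forall a, a \notin A -> c a = 0) -> \sum_a c a *: y a = 0 -> forall a, c a = 0.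
Proof.
elim: S A y c => [|k S IH] A y c /=.
  move=> _ A_le1 y_neq0 _ c_out sum0 a.
  have [aA|] := boolP (a \in A); last exact: c_out.
  apply: sum_scale_single (y_neq0 a aA) sum0 => b ba; apply: c_out.
  apply: contraTN A_le1 => bA; rewrite -ltnNge (cardD1 a) aA add1n ltnS.
  by apply/card_gt0P; exists b; rewrite !inE ba.
case/andP=> kS S_uniq A_le y_neq0 sepS c_out sum0.
have [A0|[b bA]] := set_0Vmem A.
  by move=> a; apply: c_out; rewrite A0 inE.
have [u [u_y u_det]] := sepS k (mem_head _ _).
pose y' a := contract k (u b) (y a).
pose c' a := if a == b then 0 else c a.
have c'_eq0 : forall a, c' a = 0.
  apply: (IH (A :\ b) y') => //.
  - by move: A_le; rewrite (cardsD1 b A) bA.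
  - move=> a /setD1P[ab aA]; apply/eqP => y'a0.
    by move: (u_det a b aA bA ab); rewrite (contract_det2 (u_y a aA) y'a0 (y_neq0 a aA)) eqxx.
  - move=> k' k'S; have [u' [u'_y u'_det]] := sepS k' (mem_behead (s := k :: S) k'S).
    exists u'; split => [a /setD1P[_ aA]|a a' /setD1P[_ aA] /setD1P[_ a'A]].
      have neq_k : k != k' by apply: contraNneq kS => ->.
      by rewrite /y' contractC // u'_y // contract0.
    exact: u'_det.
  - move=> a; rewrite /c' !inE negb_and negbK => /orP[/eqP->|aA]; first by rewrite eqxx.
    by case: eqP => // _; apply: c_out.
  - transitivity (contract k (u b) (\sum_a c a *: y a)); last by rewrite sum0 contract0.
    rewrite contract_sum; apply: eq_bigr => a _; rewrite /c' /y'.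
    by case: eqP => [->|//]; rewrite u_y // !scaler0.
have c_eq0 : forall a, a != b -> c a = 0.
  by move=> a ab; have := c'_eq0 a; rewrite /c' (negbTE ab).
have cb0 := sum_scale_single c_eq0 (y_neq0 b bA) sum0.
by move=> a; have [->|/c_eq0] := eqVneq a b.
Qed.

End SlotSeparation.

Lemma slot_separated_row_free (F : fieldType) m r (S : seq 'I_m)
    (y : 'I_r -> 'rV[F]_(2 ^ m)) :
  uniq S -> (r <= (size S).+1)%N -> (forall a, y a != 0) ->
  {in S, forall k, slot_separated k setT y} -> row_free (\matrix_a y a).
Proof.
move=> S_uniq r_le y_neq0 sepS; rewrite -kermx_eq0; apply/rowV0P => c /sub_kermxP c_ker.
apply/rowP => a; rewrite mxE; apply: (slot_separated_indep S_uniq _ _ sepS) => //.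
- by rewrite cardsT card_ord.
- by move=> b; rewrite inE.
transitivity (c *m \matrix_a y a); last exact: c_ker.
by rewrite mulmx_sum_row; apply: eq_bigr => b _; rewrite rowK.
Qed.

Section BinaryForms.
Variable F : fieldType.
Implicit Types (p q : {poly F}) (v : 'rV[F]_2) (x : F).

Definition affine_pt x : 'rV[F]_2 := \row_(i < 2) if i == 0 then x else 1.

Lemma affine_pt_neq0 x : affine_pt x != 0.
Proof. by apply/eqP => /rowP/(_ 1); rewrite !mxE; apply/eqP/oner_neq0. Qed.

Lemma bform_sum_scale (I : finType) e (c : I -> F) (p : I -> {poly F}) v :
  bform e (\sum_s c s *: p s) v = \sum_s c s * bform e (p s) v.
Proof.
rewrite /bform; under eq_bigr do rewrite coef_sum !big_distrl.
rewrite exchange_big /=; apply: eq_bigr => s _; rewrite big_distrr /=.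
by apply: eq_bigr => k _; rewrite coefZ; ring.
Qed.

Lemma bformD e p q v : bform e (p + q) v = bform e p v + bform e q v.
Proof. by rewrite /bform -big_split; apply: eq_bigr => k _; rewrite coefD !mulrDl. Qed.

Lemma bform0 e v : bform e 0 v = 0.
Proof. by rewrite /bform big1 // => k _; rewrite coef0 !mul0r. Qed.

Lemma bformMX e p v : bform e.+1 ('X * p) v = bform e p v * v 0 0.
Proof.
rewrite /bform big_ord_recl coefXM /= !mul0r add0r big_distrl.
by apply: eq_bigr => k _; rewrite coefXM /bump /= subSS exprSr add0n; ring.
Qed.

Lemma bform_degS e p v : is_bform e p -> bform e.+1 p v = bform e p v * v 0 1.
Proof.
move=> p_le; rewrite /bform big_ord_recr /= nth_default // !mul0r addr0 big_distrl.
by apply: eq_bigr => k _ /=; rewrite subSn ?exprSr ?mulrA // -ltnS.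
Qed.

Lemma bform_affine e p x : is_bform e p -> bform e p (affine_pt x) = p.[x].
Proof.
move=> p_le; rewrite (horner_coef_wide x p_le) /bform.
by apply: eq_bigr => k _; rewrite !mxE /= expr1n mulr1.
Qed.

Lemma bform_homog e p c v : bform e p (c *: v) = c ^+ e * bform e p v.
Proof.
rewrite /bform big_distrr; apply: eq_bigr => k _; rewrite !mxE !exprMn.
have k_le : (k <= e)%N by rewrite -ltnS.
by rewrite -[in c ^+ e](subnKC k_le) exprD /=; ring.
Qed.

Lemma bform_inf e p v : v 0 1 = 0 -> bform e p v = p`_e * v 0 0 ^+ e.
Proof.
move=> v1; rewrite /bform big_ord_recr /= subnn expr0 mulr1 big1 ?add0r // => k _.
by rewrite v1 expr0n subn_eq0 leqNgt ltn_ord /= mulr0.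
Qed.

Lemma poly_eq0_of_roots p :
  (forall i j : nat, ((i%:R : F) == j%:R) = (i == j)) -> (forall x, p.[x] = 0) -> p = 0.
Proof.
move=> natr_eq p_root; apply/eqP; apply: contraT => p_neq0.
have := @max_poly_roots F p [seq (i%:R : F) | i <- iota 0 (size p)] p_neq0.
rewrite size_map size_iota ltnn; apply; first by apply/allP => x /mapP[i _ ->]; apply/rootP.
by rewrite map_inj_uniq ?iota_uniq // => i i' /eqP; rewrite natr_eq => /eqP.
Qed.

Lemma bform_eq0_generic d e f q :
  (forall i j : nat, ((i%:R : F) == j%:R) = (i == j)) ->
  is_bform d f -> f != 0 -> is_bform e q ->
  (forall v, v != 0 -> bform d f v != 0 -> bform e q v = 0) -> q = 0.
Proof.
move=> natr_eq f_deg f_neq0 q_deg q_gen.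
suff /eqP : q * f = 0 by rewrite mulf_eq0 (negbTE f_neq0) orbF => /eqP.
apply: poly_eq0_of_roots => // x; rewrite hornerM.
have [->|fx_neq0] := eqVneq f.[x] 0; first by rewrite mulr0.
rewrite -(bform_affine x q_deg) q_gen ?mul0r ?affine_pt_neq0 //.
by rewrite bform_affine.
Qed.

Lemma row2_eq0 v : v 0 0 = 0 -> v 0 1 = 0 -> v = 0.
Proof.
move=> v0 v1; apply/rowP => t; rewrite mxE.
case: t => [[|[|//]] t_lt].
  by have -> : Ordinal t_lt = 0 by apply: val_inj.
by have -> : Ordinal t_lt = 1 by apply: val_inj.
Qed.

Lemma det2_eq0_submx v v' : v != 0 -> det2 v v' = 0 -> (v' <= v)%MS.
Proof.
rewrite /det2 => v_neq0 /eqP; rewrite subr_eq0 => /eqP det0; apply/sub_rVP.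
have [v0|v0_neq0] := eqVneq (v 0 0) 0.
  have v1_neq0 : v 0 1 != 0 by apply: contraNneq v_neq0 => v1; apply/eqP/row2_eq0.
  exists (v' 0 1 / v 0 1); apply/rowP => t; rewrite !mxE.
  case: t => [[|[|//]] t_lt].
    have -> : Ordinal t_lt = 0 by apply: val_inj.
    by rewrite v0 mulr0; move: det0; rewrite v0 mul0r => /esym/eqP; rewrite mulf_eq0 (negbTE v1_neq0) => /eqP.
  have -> : Ordinal t_lt = 1 by apply: val_inj.
  by rewrite divfK.
exists (v' 0 0 / v 0 0); apply/rowP => t; rewrite !mxE.
case: t => [[|[|//]] t_lt].
  have -> : Ordinal t_lt = 0 by apply: val_inj.
  by rewrite divfK.
have -> : Ordinal t_lt = 1 by apply: val_inj.
by apply: (mulIf v0_neq0); rewrite mulrAC divfK // mulrC det0 mulrC.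
Qed.

Lemma det2_eq0_eqmx v v' : v != 0 -> v' != 0 -> det2 v v' = 0 -> (v == v')%MS.
Proof.
move=> v_neq0 v'_neq0 det0; apply/andP; split; apply: det2_eq0_submx => //.
have -> : det2 v' v = - det2 v v' by rewrite /det2; ring.
by rewrite det0 oppr0.
Qed.

End BinaryForms.

Section FactorizationCurves.
Variables (F : fieldType) (m : nat) (Phi : 'M[F]_(m.+1, 2 ^ m)).
Hypothesis natr_eq : forall i j : nat, ((i%:R : F) == j%:R) = (i == j).
Implicit Types (e : nat) (P : 'I_m.+1 -> {poly F}) (v : 'rV[F]_2) (k : 'I_m).

Lemma rmap_ptZ e P c v : rmap_pt e P (c *: v) = c ^+ e *: rmap_pt e P v.
Proof. by apply/rowP => i; rewrite !mxE bform_homog. Qed.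

Lemma rmap_pt_submx e P v v' : (v' <= v)%MS -> (rmap_pt e P v' <= rmap_pt e P v)%MS.
Proof. by case/sub_rVP => c ->; rewrite rmap_ptZ scalemx_sub. Qed.

(* A common zero [x:1] would give the common factor 'X - x, a common zero
   [1:0] a vanishing top coefficient. *)
Lemma rmap_pt_neq0 e P v : regular_P1_map e P -> v != 0 -> rmap_pt e P v != 0.
Proof.
case=> P_deg P_coprime [i0 Pi0_top] v_neq0; apply/eqP => /rowP P_v0.
have P_v i : bform e (P i) v = 0 by have := P_v0 i; rewrite !mxE.
have [v1|v1_neq0] := eqVneq (v 0 1) 0.
  have v0_neq0 : v 0 0 != 0 by apply: contraNneq v_neq0 => v0; apply/eqP/row2_eq0.
  move/eqP: (P_v i0); rewrite bform_inf // mulf_eq0 (negbTE Pi0_top) expf_eq0.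
  by rewrite (negbTE v0_neq0) andbF.
pose x := v 0 0 / v 0 1.
have v_affine : v = v 0 1 *: affine_pt x.
  apply/rowP => t; rewrite !mxE; case: t => [[|[|//]] t_lt].
    have -> : Ordinal t_lt = 0 by apply: val_inj.
    by rewrite /x mulrC divfK.
  have -> : Ordinal t_lt = 1 by apply: val_inj.
  by rewrite mulr1.
have P_root i : root (P i) x.
  move/eqP: (P_v i); rewrite v_affine bform_homog bform_affine // mulf_eq0 expf_eq0.
  by rewrite (negbTE v1_neq0) andbF.
have := P_coprime ('X - x%:P) (fun i => etrans (dvdp_XsubCl _ _) (P_root i)).
by rewrite size_XsubC.
Qed.

Lemma rmap_pt_mulmx_neq0 e P v : row_free Phi -> regular_P1_map e P -> v != 0 ->
  rmap_pt e P v *m Phi != 0.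
Proof.
move=> Phi_free P_regular v_neq0.
by rewrite -(mul0mx _ Phi) (inj_eq (row_free_inj Phi_free)) rmap_pt_neq0.
Qed.

Lemma preimSigma_contract k v (w : 'rV[F]_m.+1) :
  (w <= preimSigma Phi k v)%MS -> contract k v (w *m Phi) = 0.
Proof.
by move/sub_kermxP; rewrite mulmxA => /eqP; rewrite -submxE => /contract_Sigma0.
Qed.

Definition Phi_form P (t : 'I_(2 ^ m)) : {poly F} := \sum_s Phi s t *: P s.

Lemma is_bform_Phi_form e P t : (forall i, is_bform e (P i)) -> is_bform e (Phi_form P t).
Proof.
move=> P_deg; rewrite /is_bform /Phi_form; elim/big_ind: _ => [|p q|s _].
- by rewrite size_poly0.
- by move=> p_le q_le; rewrite (leq_trans (size_polyD _ _)) // geq_max p_le q_le.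
- exact: leq_trans (size_scale_leq _ _) (P_deg s).
Qed.

Lemma rmap_pt_mulmx e P v t : (rmap_pt e P v *m Phi) 0 t = bform e (Phi_form P t) v.
Proof.
by rewrite !mxE bform_sum_scale; apply: eq_bigr => s _; rewrite mxE mulrC.
Qed.

Lemma contract_rmap_pt e P k v i : (forall s, is_bform e (P s)) ->
  contract k v (rmap_pt e P v *m Phi) 0 i =
  bform e.+1 ('X * Phi_form P (of_tbits (setbit (tbits i) k false))
                + Phi_form P (of_tbits (setbit (tbits i) k true))) v.
Proof.
move=> P_deg; rewrite mxE !rmap_pt_mulmx bformD bformMX bform_degS //.
exact: is_bform_Phi_form.
Qed.

Lemma factorization_curve_contract k e P :
  factorization_curve Phi k e P -> forall v, contract k v (rmap_pt e P v *m Phi) = 0.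
Proof.
case=> [[P_deg _ _] [d [f [f_deg f_neq0 f_gen]]]] v; apply/rowP => i.
rewrite contract_rmap_pt // mxE.
set Q := (X in bform _ X v); suff -> : Q = 0 by rewrite bform0.
apply: (bform_eq0_generic (e := e.+1) natr_eq f_deg f_neq0) => [|v' v'_neq0 fv'_neq0].
  rewrite /is_bform (leq_trans (size_polyD _ _)) // geq_max; apply/andP; split.
    by rewrite (leq_trans (size_polyMleq _ _)) // size_polyX; apply: is_bform_Phi_form.
  exact: leq_trans (is_bform_Phi_form _ P_deg) _.
have [_ /andP[v'_preim _]] := f_gen v' v'_neq0 fv'_neq0.
by rewrite -contract_rmap_pt // preimSigma_contract // mxE.
Qed.

Lemma factorization_curve_eqmx k e P v v' : row_free Phi ->
  factorization_curve Phi k e P -> v != 0 -> v' != 0 ->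
  (rmap_pt e P v' <= rmap_pt e P v)%MS -> (v == v')%MS.
Proof.
move=> Phi_free curve v_neq0 v'_neq0 /sub_rVP[s v'_s].
have [P_regular _] := curve.
have y_neq0 := rmap_pt_mulmx_neq0 Phi_free P_regular v_neq0.
have s_neq0 : s != 0.
  by apply: contraTneq (rmap_pt_neq0 P_regular v'_neq0) => s0; rewrite v'_s s0 scale0r eqxx.
apply: det2_eq0_eqmx v_neq0 v'_neq0 (contract_det2 _ _ y_neq0).
  exact: factorization_curve_contract curve v.
apply: (scalerI s_neq0); rewrite scaler0 -contractZ scalemxAl -v'_s.
exact: factorization_curve_contract curve v'.
Qed.

Lemma same_image_slot_separated k j ek ej Pk Pj r (l : 'I_r -> 'rV[F]_2) :
  row_free Phi -> factorization_curve Phi k ek Pk -> factorization_curve Phi j ej Pj ->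
  same_image ek ej Pk Pj -> (forall a, l a != 0) ->
  (forall a b, a != b -> ~~ (l a == l b)%MS) ->
  slot_separated k setT (fun a => rmap_pt ej Pj (l a) *m Phi).
Proof.
move=> Phi_free curve_k curve_j kj l_neq0 l_inj.
have w_neq0 a : rmap_pt ej Pj (l a) != 0 by apply: rmap_pt_neq0 (l_neq0 a); case: curve_j.
have preim a : exists u, u != 0 /\ (rmap_pt ek Pk u == rmap_pt ej Pj (l a))%MS.
  by apply/(kj _ (w_neq0 a)); exists (l a); rewrite l_neq0 /eqmx submx_refl.
have [u u_spec] := fin_all_exists preim.
exists u; split => [a _|a b _ _ ab].
  have /andP[_ /sub_rVP[s ->]] := (u_spec a).2.
  by rewrite -scalemxAl contractZ factorization_curve_contract ?scaler0.
apply: contra (l_inj a b ab) => /eqP det0.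
apply: (factorization_curve_eqmx Phi_free curve_j) => //.
have /andP[_ wb_sub] := (u_spec b).2; have /andP[sub_wa _] := (u_spec a).2.
apply: submx_trans wb_sub (submx_trans _ sub_wa).
exact: rmap_pt_submx (det2_eq0_submx (u_spec a).1 det0).
Qed.

End FactorizationCurves.

Unset Implicit Arguments. Set Strict Implicit.

Theorem corollary2p16 (R : realType) (F : fieldType)
    (HF : F = (R : fieldType) \/ F = ((R[i])%C : fieldType))
    (m : nat) (Phi : 'M[F]_(m.+1, 2 ^ m))
    (HPhi : factorization_structure Phi)
    (e : 'I_m -> nat) (P : 'I_m -> 'I_m.+1 -> {poly F})
    (Hcurves : forall k : 'I_m, factorization_curve Phi k (e k) (P k))
    (j : 'I_m)
    (Hdecomp : exists S : {set 'I_m},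
       (forall k, k \in S <-> same_image (e k) (e j) (P k) (P j)) /\ #|S| = e j)
    (r : nat) (Hr : (1 <= r <= (e j).+1)%N)
    (l : 'I_r -> 'rV[F]_2)
    (Hl0 : forall a, l a != 0)
    (Hldist : forall a b, a != b -> ~~ (l a == l b)%MS) :
  row_free (\matrix_(a < r) rmap_pt (e j) (P j) (l a)).
Proof.
have natr_eq : forall i i' : nat, ((i%:R : F) == i'%:R) = (i == i').
  by case: HF => ->; apply: Num.Theory.eqr_nat.
have [Phi_free _] := HPhi.
have [S [S_img S_card]] := Hdecomp.
have -> : row_free (\matrix_a rmap_pt (e j) (P j) (l a)) =
          row_free (\matrix_a (rmap_pt (e j) (P j) (l a) *m Phi)).
  rewrite /row_free -(mxrankMfree _ Phi_free); congr (\rank _ == _).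
  by apply/row_matrixP => a; rewrite row_mul !rowK.
apply: (slot_separated_row_free (enum_uniq (mem S))).
- by rewrite -cardE S_card; case/andP: Hr.
- by move=> a; apply: rmap_pt_mulmx_neq0 Phi_free (Hcurves j).1 (Hl0 a).
- move=> k; rewrite mem_enum => /S_img kj.
  exact: (same_image_slot_separated natr_eq Phi_free (Hcurves k) (Hcurves j) kj Hl0 Hldist).
Qed.
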